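(* Let $i\in\{3\frac{1}{2},4,5\}$. Let $\mathscr{P}$ be a topological property which is closed hereditary, co-local, and preserved under finite closed sums. If $X$ is a locally connected $T_i$-space all of whose components are non-compact and have $\mathscr{P}$, then $X$ has a $T_i$ one-point connectification which has $\mathscr{P}$.
   Context: Conventions: $T_{3\frac12}$ = completely regular and $T_1$; $T_4$ = normal and $T_1$; $T_5$ = hereditarily normal (every subspace normal) and $T_1$. A one-point connectification of a space $X$ is a connected space $Y$ which contains $X$ as a dense subspace and such that $Y\setminus X$ is a singleton. A topological property $\mathscr{P}$ is: closed hereditary if every closed subspace of a space with $\mathscr{P}$ has $\mathscr{P}$; preserved under finite closed sums if every space which is a finite union of closed subspaces each having $\mathscr{P}$ has $\mathscr{P}$; co-local if a space $X$ has $\mathscr{P}$ whenever there are a point $p\in X$ and an open base $\mathfrak{B}$ at $p$ such that $X\setminus B$ has $\mathscr{P}$ for every $B\in\mathfrak{B}$. *)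

From HB Require Import structures.
From mathcomp Require Import all_boot all_order all_algebra.
From mathcomp Require Import all_classical all_reals all_analysis.
From mathcomp Require Import Rstruct Rstruct_topology.
From Stdlib Require Import Rdefinitions.

Set Implicit Arguments.
Unset Strict Implicit.
Unset Printing Implicit Defensive.

Local Open Scope classical_set_scope.

(* Subspaces: for A : set X, [set_type A] carries the subspace (initial)
   topology induced by the inclusion (library instance, subtype_topology.v). *)

Definition homeomorphic (X Y : topologicalType) : Prop :=
  exists (f : X -> Y) (g : Y -> X),
    continuous f /\ continuous g /\ cancel f g /\ cancel g f.

Definition topological_property (P : topologicalType -> Prop) : Prop :=
  forall X Y : topologicalType, homeomorphic X Y -> P X -> P Y.

Definition closed_hereditary (P : topologicalType -> Prop) : Prop :=
  forall (X : topologicalType) (A : set X), closed A -> P X -> P (set_type A).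

Definition finite_closed_sums (P : topologicalType -> Prop) : Prop :=
  forall (X : topologicalType) (n : nat) (A : 'I_n -> set X),
    (forall i, closed (A i)) -> (forall i, P (set_type (A i))) ->
    \bigcup_(i in [set: 'I_n]) A i = [set: X] -> P X.

Definition open_base_at (X : topologicalType) (p : X) (B : set (set X)) : Prop :=
  (forall b, B b -> open b /\ b p) /\
  (forall U, nbhs p U -> exists2 b, B b & b `<=` U).

Definition co_local (P : topologicalType -> Prop) : Prop :=
  forall (X : topologicalType) (p : X) (B : set (set X)),
    open_base_at p B -> (forall b, B b -> P (set_type (~` b))) -> P X.

Definition T1_space (X : topologicalType) : Prop := accessible_space X.

Definition completely_regular (X : topologicalType) : Prop :=
  forall (a : X) (B : set X), closed B -> ~ B a ->
    exists f : X -> R, continuous f /\ f a = 0%R /\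
      (forall b, B b -> f b = 1%R) /\
      (forall x, (0 <= f x)%R /\ (f x <= 1)%R).

Definition hereditarily_normal (X : topologicalType) : Prop :=
  forall A : set X, normal_space (set_type A).

Inductive sep_index := T3half | T4 | T5.

Definition Ti (i : sep_index) (X : topologicalType) : Prop :=
  match i with
  | T3half => completely_regular X /\ T1_space X
  | T4 => normal_space X /\ T1_space X
  | T5 => hereditarily_normal X /\ T1_space X
  end.

Definition locally_connected (X : topologicalType) : Prop :=
  forall (x : X) (U : set X), nbhs x U ->
    exists V : set X, [/\ open V, V x, connected V & V `<=` U].

Definition embedding (X Y : topologicalType) (e : X -> Y) : Prop :=
  [/\ injective e, continuous e &
      forall U : set X, open U -> exists2 V : set Y, open V & e @` U = V `&` range e].

Definition one_point_connectification (X Y : topologicalType) (e : X -> Y) : Prop :=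
  [/\ embedding e, connected [set: Y], dense (range e) &
      exists p : Y, ~` range e = [set p]].

From HB Require Import structures.
From mathcomp Require Import all_boot all_order all_algebra.
From mathcomp Require Import all_classical all_reals all_analysis.
From mathcomp Require Import Rstruct Rstruct_topology.
From mathcomp Require Import lra.

Set Implicit Arguments.
Unset Strict Implicit.
Unset Printing Implicit Defensive.
Import Order.TTheory GRing.Theory Num.Theory.
Local Open Scope classical_set_scope.
Local Open Scope ring_scope.

(* Adjoin to X a point None, whose basic neighbourhoods are None together with
   {g < 1}, for the admissible g: continuous, g >= 0, and with small support
   {g > 0}, i.e. the support lies in finitely many components and, for every
   component C, misses a member of a filter on C without cluster point in C
   (one exists because C is not compact).  Small sets are closed under finite
   unions but no component is small, so every basic neighbourhood meets every
   component: None lies in the closure of each component, whence the new space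
   is connected and X is dense in it.  The complement of a basic neighbourhood
   is the union of the finitely many closed sets {g >= 1} /\ C, C a component
   meeting the support of g; each is homeomorphic to a closed subset of C, so P
   passes to the new space by co-locality.  As components are open, every point
   of X has a small open neighbourhood, and complete regularity of X turns it
   into an admissible bump function; these give the T1 axiom and complete
   regularity.  For (complete) normality, a set away from None lies in some
   {g >= 1}, and is separated in X from the other set enlarged by {g <= 1/2}. *)

Local Notation R := Rdefinitions.R.

Lemma open_set_typeP (T : topologicalType) (A : set T) (U : set (set_type A)) :
  open U <-> exists2 O, open O & U = set_val @^-1` O.
Proof. by split; case=> O oO eU; exists O; rewrite ?eU. Qed.

Lemma closure_preimage (T U : topologicalType) (f : T -> U) (A : set U) :
  continuous f -> closure (f @^-1` A) `<=` f @^-1` closure A.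
Proof. by move=> cf x clx N /cf/clx [z [Az Nz]]; exists (f z). Qed.

Lemma open_component (T : topologicalType) (x : T) :
  locally_connected T -> open (connected_component [set: T] x).
Proof.
move=> lcT; rewrite openE => y cy.
have [V [oV Vy cV _]] := lcT y _ (filterT : nbhs y setT).
apply: (@filterS _ _ _ V); last exact: open_nbhs_nbhs.
rewrite (same_connected_component cy).
exact: connected_component_max.
Qed.

Section real_function_level_sets.
Variables (T : topologicalType) (f : T -> R) (c : R).
Hypothesis cf : continuous f.

Lemma open_lt_fun : open [set x | f x < c].
Proof.
change (open (f @^-1` [set r : R | r < c])).
by apply: open_comp; [move=> x _; exact: cf | exact: open_lt].
Qed.

Lemma closed_le_fun : closed [set x | f x <= c].
Proof.
change (closed (f @^-1` [set r : R | r <= c])).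
by apply: (proj1 (continuous_closedP _) cf); exact: closed_le.
Qed.

Lemma closed_ge_fun : closed [set x | c <= f x].
Proof.
change (closed (f @^-1` [set r : R | c <= r])).
by apply: (proj1 (continuous_closedP _) cf); exact: closed_ge.
Qed.

End real_function_level_sets.

Lemma homeomorphic_sym (T U : topologicalType) :
  homeomorphic T U -> homeomorphic U T.
Proof. by case=> f [g [cf [cg [fK gK]]]]; exists g, f. Qed.

Section subspace_of_subspace.
Variables (T : topologicalType) (A B : set T).
Hypothesis BA : B `<=` A.

Let B' : set (set_type A) := set_val @^-1` B.

Let incl (z : set_type B) : set_type A := SigSub (mem_set (BA (set_valP z))).

Let lift (z : set_type B) : set_type B' :=
  SigSub (mem_set (set_valP z : B' (incl z))).

Let drop (w : set_type B') : set_type B :=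
  exist _ (set_val (set_val w)) (mem_set (set_valP w)).

Lemma homeomorphic_subspace_preimage : homeomorphic (set_type B') (set_type B).
Proof.
exists drop, lift; split; [|split; [|split]].
- apply: continuous_comp_initial.
  have -> : set_val \o drop = set_val \o set_val by [].
  by move=> w; apply: continuous_comp; exact: initial_continuous.
- do 2 apply: continuous_comp_initial.
  by have -> : set_val \o (set_val \o lift) = set_val by []; exact: initial_continuous.
- by move=> w; do 2 apply: val_inj.
- by move=> z; apply: val_inj.
Qed.

End subspace_of_subspace.

Section embedding_image.
Variables (T U : topologicalType) (e : T -> U) (K : set T).
Hypothesis emb : embedding e.

Let push (k : set_type K) : set_type (e @` K) :=
  SigSub (mem_set (imageP e (set_valP k))).

Let pull (z : set_type (e @` K)) : set_type K :=
  SigSub (mem_set (s2valP (cid2 (set_valP z)))).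

Let pullK z : e (set_val (pull z)) = set_val z.
Proof. exact: s2valP' (cid2 (set_valP z)). Qed.

Lemma homeomorphic_embedding_image : homeomorphic (set_type K) (set_type (e @` K)).
Proof.
have [einj ce eopen] := emb.
exists push, pull; split; [|split; [|split]].
- apply: continuous_comp_initial.
  have -> : set_val \o push = e \o set_val by [].
  by move=> k; apply: continuous_comp; [exact: initial_continuous | exact: ce].
- apply: continuous_comp_initial; apply/continuousP => O oO.
  have [V oV eOV] := eopen O oO.
  suff -> : (set_val \o pull) @^-1` O = set_val @^-1` V.
    by apply/open_set_typeP; exists V.
  apply/seteqP; split=> z /= => [Oz|Vz].
    have : (e @` O) (set_val z) by exists (set_val (pull z)); last exact: pullK.
    by rewrite eOV => -[].
  have : (e @` O) (set_val z).
    by rewrite eOV; split=> //; exists (set_val (pull z)); last exact: pullK.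
  by case=> x Ox; rewrite -pullK => /einj <-.
- by move=> k; apply: val_inj; apply: einj; rewrite pullK.
- by move=> z; apply: val_inj; exact: pullK.
Qed.

End embedding_image.

Lemma closed_hereditary_sub (P : topologicalType -> Prop) (T : topologicalType) (C K : set T) :
  topological_property P -> closed_hereditary P ->
  P (set_type C) -> closed K -> K `<=` C -> P (set_type K).
Proof.
move=> tpP chP PC cK KC; apply: tpP (homeomorphic_subspace_preimage KC) _.
apply: chP PC.
exact: (proj1 (continuous_closedP _) (@initial_continuous _ _ _) _ cK).
Qed.

Definition separable (T : topologicalType) (A B : set T) :=
  exists U V, [/\ open U, open V, A `<=` U, B `<=` V & U `&` V = set0].

Lemma separable_sym (T : topologicalType) (A B : set T) :
  separable A B -> separable B A.
Proof.
by case=> U [V [oU oV AU BV UV]]; exists V, U; split=> //; rewrite setIC.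
Qed.

Definition completely_normal (T : topologicalType) := forall A B : set T,
  closure A `&` B = set0 -> A `&` closure B = set0 -> separable A B.

Lemma completely_normal_normal (T : topologicalType) :
  completely_normal T -> normal_space T.
Proof.
move=> cnT; apply/(@normal_openP R) => A B cA cB AB.
by apply: cnT; [rewrite -(closure_id A).1 | rewrite -(closure_id B).1].
Qed.

Lemma closure_set_val_image_disjoint (T : topologicalType) (S : set T)
    (A B : set (set_type S)) :
  closed A -> A `&` B = set0 -> closure (set_val @` A) `&` (set_val @` B) = set0.
Proof.
move=> cA AB; apply/seteqP; split=> // y [cly [b Bb eby]].
have /open_set_typeP [W oW eW] := closed_openC cA.
have nAb : (~` A) b by move=> Ab; have : (A `&` B) b by []; rewrite AB.
have Wb : W (set_val b) by move: nAb; rewrite eW.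
rewrite -eby in cly; have [_ [[a Aa <-] Wa]] := cly W (open_nbhs_nbhs (conj oW Wb)).
by have : (~` A) a by rewrite eW.
Qed.

Lemma hereditarily_normal_completely_normal (T : topologicalType) :
  hereditarily_normal T -> completely_normal T.
Proof.
move=> hT A B clAB AclB; pose S := ~` (closure A `&` closure B).
have oS : open S by apply: closed_openC; apply: closedI; exact: closed_closure.
have SA a : A a -> S a.
  by move=> Aa [_ clBa]; have : (A `&` closure B) a by []; rewrite AclB.
have SB b : B b -> S b.
  by move=> Bb [clAb _]; have : (closure A `&` B) b by []; rewrite clAB.
have /(@normal_openP R) := hT S.
move=> /(_ (set_val @^-1` closure A) (set_val @^-1` closure B)) [].
- exact: (proj1 (continuous_closedP _) (@initial_continuous _ _ _) _ (@closed_closure _ A)).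
- exact: (proj1 (continuous_closedP _) (@initial_continuous _ _ _) _ (@closed_closure _ B)).
- by apply/seteqP; split=> // s [s1 s2]; apply: (set_valP s).
move=> _ [_ [/open_set_typeP [U oU ->] /open_set_typeP [V oV ->] AU BV UV]].
exists (U `&` S), (V `&` S); split; [exact: openI|exact: openI| | |].
- move=> a Aa; split; last exact: SA.
  exact: (AU (exist _ a (mem_set (SA a Aa))) (subset_closure Aa)).
- move=> b Bb; split; last exact: SB.
  exact: (BV (exist _ b (mem_set (SB b Bb))) (subset_closure Bb)).
- apply/seteqP; split=> // x [[Ux Sx] [Vx _]].
  have : (set_val @^-1` U `&` set_val @^-1` V) (exist _ x (mem_set Sx)) by [].
  by rewrite UV.
Qed.

Lemma completely_normal_hereditarily_normal (T : topologicalType) :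
  completely_normal T -> hereditarily_normal T.
Proof.
move=> cnT S; apply/(@normal_openP R) => A B cA cB AB.
have clAB := closure_set_val_image_disjoint cA AB.
have AclB : (set_val @` A) `&` closure (set_val @` B) = set0.
  by rewrite setIC closure_set_val_image_disjoint // setIC.
have [U [V [oU oV AU BV UV]]] := cnT _ _ clAB AclB.
exists (set_val @^-1` U), (set_val @^-1` V); split.
- by apply/open_set_typeP; exists U.
- by apply/open_set_typeP; exists V.
- by move=> a Aa; apply: AU; exists a.
- by move=> b Bb; apply: BV; exists b.
- by rewrite -preimage_setI UV preimage_set0.
Qed.

Definition separating_fun (T : topologicalType) (a : T) (B : set T) (f : T -> R) :=
  [/\ continuous f, f a = 0, (forall b, B b -> f b = 1) & forall x, 0 <= f x <= 1].

(* [completely_regular] uses Stdlib's order on [R]; [cregular] is the same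
   notion stated with MathComp's order, see [completely_regularP]. *)
Definition cregular (T : topologicalType) := forall (a : T) (B : set T),
  closed B -> ~ B a -> exists f, separating_fun a B f.

Lemma completely_regularP (T : topologicalType) :
  completely_regular T <-> cregular T.
Proof.
split=> crT a B cB nBa.
  have [f [cf [fa [fB f01]]]] := crT a B cB nBa.
  by exists f; split=> // x; have [? ?] := f01 x; apply/andP; split; apply/RleP.
have [f [cf fa fB f01]] := crT a B cB nBa.
by exists f; do 3 split=> //; move=> x; have /andP[? ?] := f01 x; split; apply/RleP.
Qed.

Lemma normal_cregular (T : topologicalType) :
  normal_space T -> accessible_space T -> cregular T.
Proof.
move=> nT aT a B cB nB.
have /(@uniform_separatorP _ R) [f [cf f01 fa fB]] :=
  @normal_completely_regular R T nT aT a B cB nB.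
exists f; split=> //.
- by apply: fa; exists a.
- by move=> b Bb; apply: fB; exists b.
- by move=> x; have := f01 (f x) (imageT f x); rewrite /= in_itv.
Qed.

Section connectification.
Variable X : topologicalType.

Local Notation component x := (connected_component [set: X] x).

Let component_refl x : component x x.
Proof. exact: connected_component_refl. Qed.

Definition escaping (C : set X) (F : set_system X) :=
  [/\ ProperFilter F, F C & forall y, C y -> ~ cluster F y].

(* The improper filter [setT] when [C] is compact. *)
Definition escape (C : set X) : set_system X :=
  if pselect (exists F, escaping C F) is left h then projT1 (cid h) else setT.

Lemma escapeP C : ~ compact C -> escaping C (escape C).
Proof.
rewrite /escape; case: pselect => [h|nh] nC; first exact: projT2 (cid h).
exfalso; apply: nC => F PF FC; apply: contrapT => nn; apply: nh.
by exists F; split=> // y Cy cl; apply: nn; exists y.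
Qed.

Instance escape_filter C : Filter (escape C).
Proof.
rewrite /escape; case: pselect => [h|_]; last exact: filter_setT.
by have [PF _ _] := projT2 (cid h); exact: filter_filter.
Qed.

Definition small (S : set X) :=
  (exists s : seq X, S `<=` \bigcup_(c in [set` s]) component c) /\
  (forall x, exists2 G, escape (component x) G & S `&` G = set0).

Lemma sub_small S T : S `<=` T -> small T -> small S.
Proof.
move=> ST [[s Ts] TG]; split; first by exists s => y /ST /Ts.
move=> x; have [G FG TG0] := TG x; exists G => //.
by apply/seteqP; split=> // y [/ST Ty Gy]; rewrite -TG0.
Qed.

Lemma small0 : small set0.
Proof.
split; first by exists [::].
by move=> x; exists setT; [exact: filterT | rewrite set0I].
Qed.

Lemma smallU S T : small S -> small T -> small (S `|` T).
Proof.
move=> [[s Ss] SG] [[t Tt] TG]; split.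
  exists (s ++ t) => y [/Ss [c cs cy]|/Tt [c ct cy]]; exists c => //=;
  by rewrite mem_cat ?cs ?ct ?orbT.
move=> x; have [G FG SG0] := SG x; have [H FH TH0] := TG x.
exists (G `&` H); first exact: filterI.
apply/seteqP; split=> // y [[Sy|Ty] [Gy Hy]].
  by have : (S `&` G) y by []; rewrite SG0.
by have : (T `&` H) y by []; rewrite TH0.
Qed.

Definition admissible (g : X -> R) :=
  [/\ continuous g, forall x, 0 <= g x & small [set x | 0 < g x]].

Lemma admissible0 : admissible (fun=> 0).
Proof.
split=> //; first by move=> x; exact: cvg_cst.
by apply: sub_small small0 => x /=; rewrite ltxx.
Qed.

Lemma admissibleD g h : admissible g -> admissible h -> admissible (g \+ h).
Proof.
move=> [cg g0 sg] [ch h0 sh]; split.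
- by move=> x; apply: (@continuousD R R^o _ g h); [exact: cg | exact: ch].
- by move=> x; apply: addr_ge0.
- apply: sub_small (smallU sg sh) => x /= ghx.
  by have [gx|gx] := ltP 0 (g x); [left | right; move: ghx gx => /=; lra].
Qed.

Lemma admissibleZ g c : admissible g -> 0 < c -> admissible (fun x => c * g x).
Proof.
move=> [cg g0 sg] c0; split.
- by move=> x; apply: (@continuousM _ _ (fun=> c) g); [exact: cvg_cst | exact: cg].
- by move=> x; apply: mulr_ge0 => //; exact: ltW.
- by apply: sub_small sg => x /=; rewrite pmulr_rgt0.
Qed.

Definition connectification : Type := option X.
HB.instance Definition _ := Choice.on connectification.
Local Notation Y := connectification.

Definition basic (g : X -> R) : set Y :=
  fun y => if y is Some x then g x < 1 else True.

Definition connectification_nbhs (y : Y) : set_system Y :=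
  if y is Some x then Some @ nbhs x else filter_from admissible basic.

Let connectification_nbhs_filter (y : Y) : ProperFilter (connectification_nbhs y).
Proof.
case: y => [x|]; first exact: fmap_proper_filter.
apply: filter_from_proper; last by move=> g _; exists None.
apply: filter_from_filter; first by exists (fun=> 0); exact: admissible0.
move=> g h [cg g0 sg] [ch h0 sh]; exists (g \+ h); first exact: admissibleD.
move=> [x|] //= ghx; split.
  by apply: le_lt_trans ghx; rewrite lerDl.
by apply: le_lt_trans ghx; rewrite lerDr.
Qed.

Let connectification_nbhs_singleton (y : Y) U : connectification_nbhs y U -> U y.
Proof. by case: y => [x /= /nbhs_singleton//|[g _]]; apply. Qed.

Let connectification_nbhs_nbhs (y : Y) (A : set Y) :
  connectification_nbhs y A -> connectification_nbhs y (connectification_nbhs^~ A).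
Proof.
case: y => [x /=|].
  rewrite nbhs_simpl nbhsE => -[U [oU Ux] USA /=].
  by exists U => //= z /=; rewrite nbhs_simpl nbhsE => Uz; exists U.
case=> g ag gA /=; exists g => // -[x|] gx; last by exists g.
rewrite /= nbhs_simpl nbhsE; exists [set x : X | g x < 1].
  by split=> //; apply: open_lt_fun; case: ag.
by move=> z zg; apply: gA.
Qed.

HB.instance Definition _ := hasNbhs.Build Y connectification_nbhs.

HB.instance Definition _ := @Nbhs_isNbhsTopological.Build Y
  connectification_nbhs_filter connectification_nbhs_singleton
  connectification_nbhs_nbhs.

Lemma Some_continuous : continuous (Some : X -> Y).
Proof. by move=> x U. Qed.

Lemma open_Some_image (U : set X) : open U -> open (Some @` U : set Y).
Proof.
rewrite !openE => oU _ [x Ux <-].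
change (nbhs x (Some @^-1` (Some @` U))).
by apply: filterS (oU _ Ux) => z Uz; exists z.
Qed.

Lemma open_basic g : admissible g -> open (basic g).
Proof.
move=> ag; rewrite openE => -[x|] gx; last by exists g.
change (nbhs x [set z : X | g z < 1]); apply: open_nbhs_nbhs; split=> //.
by apply: open_lt_fun; case: ag.
Qed.

Lemma embedding_Some : embedding (Some : X -> Y).
Proof.
split; [by move=> a b [] | exact: Some_continuous |].
move=> U oU; exists (Some @` U); first exact: open_Some_image.
by apply/seteqP; split=> [y [x Ux <-]|y [] //]; split=> //; exists x.
Qed.

Lemma setC_range_Some : ~` range (Some : X -> Y) = [set None].
Proof.
apply/seteqP; split=> [[x|] //|y ->]; last by case.
by move=> h; exfalso; apply: h; exists x.
Qed.

Lemma nbhs_None_admissible (B : set Y) : nbhs (None : Y) B ->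
  exists2 g, admissible g & forall x, ~ B (Some x) -> 1 <= g x.
Proof.
move=> [g ag gB]; exists g => // x nBx; rewrite leNgt; apply/negP => gx.
by apply: nBx; apply: (gB (Some x)).
Qed.

Lemma open_base_basic : open_base_at (None : Y) [set basic g | g in admissible].
Proof.
split; first by move=> _ [g ag <-]; split; [exact: open_basic | by []].
by move=> U [g ag gU]; exists (basic g) => //; exists g.
Qed.

Lemma closed_Some_image (K : set X) g : admissible g -> closed K ->
  (forall x, K x -> 1 <= g x) -> closed (Some @` K : set Y).
Proof.
move=> ag cK Kg; rewrite -openC openE => -[x|] nK.
  have nKx : ~ K x by move=> Kx; apply: nK; exists x.
  apply: (@filterS _ _ _ (~` K)).
    by move=> z nKz [w Kw [ewz]]; apply: nKz; rewrite -ewz.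
  by apply: open_nbhs_nbhs; split=> //; rewrite openC.
exists g => // -[z|] //= gz [w Kw [ewz]].
by move: (Kg _ Kw); rewrite ewz leNgt gz.
Qed.

Definition extend (c : R) (h : X -> R) (y : Y) : R :=
  if y is Some x then h x else c.

Lemma continuous_extend (c : R) (h g : X -> R) : continuous h -> admissible g ->
  (forall x, `|c - h x| <= g x) -> continuous (extend c h).
Proof.
move=> ch ag hg [x|] U /=; first by move=> nU; exact: ch.
move=> /nbhs_ballP [e e0 eU].
exists (fun x => e^-1 * g x); first by apply: admissibleZ; rewrite ?invr_gt0.
move=> [z|] /=; last by move=> _; apply: eU; exact: ballxx.
rewrite ltr_pdivrMl // mulr1 => gz; apply: eU.
by rewrite /ball /=; apply: le_lt_trans gz.
Qed.

(* Enlarging the trace of [A] by {g <= 1/2} makes the open set around it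
   contain the basic neighbourhood [basic (2 g)] of None. *)
Lemma separable_by_admissible (A B : set Y) g : admissible g ->
  (forall x, B (Some x) -> 1 <= g x) -> ~ B None ->
  separable (Some @^-1` A `|` [set x | g x <= 2^-1]) (Some @^-1` B) ->
  separable A B.
Proof.
move=> ag gB nBN [U [V [oU oV AU BV UV]]].
exists (fun y => if y is Some x then U x else True), (Some @` V); split.
- rewrite openE => -[x|] /= Ux.
    by change (nbhs x U); exact: open_nbhs_nbhs.
  exists (fun z => 2 * g z); first exact: admissibleZ.
  by move=> [z|] //= gz; apply: AU; right => /=; lra.
- exact: open_Some_image.
- by move=> [x|] Ax //; apply: AU; left.
- by move=> [x|] Bx //; exists x => //; apply: BV.
- apply/seteqP; split=> // -[x|] [Ux [z Vz [ezx]]] //.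
  have : (U `&` V) x by split=> //; rewrite -ezx.
  by rewrite UV.
Qed.

Lemma normal_separable_off_None (A B : set Y) : normal_space X ->
  closed A -> closed B -> A `&` B = set0 -> ~ B None -> separable A B.
Proof.
move=> nX cA cB AB nBN.
have [g ag gB] := nbhs_None_admissible (open_nbhs_nbhs (conj (closed_openC cB) nBN)).
apply: (separable_by_admissible ag) => //; first by move=> x Bx; apply: gB.
have [cg _ _] := ag.
move/(@normal_openP R): nX; apply.
- apply: closedU; last exact: closed_le_fun.
  exact: (proj1 (continuous_closedP _) Some_continuous).
- exact: (proj1 (continuous_closedP _) Some_continuous).
- apply/seteqP; split=> // x [[Ax|gx] Bx].
    by have : (A `&` B) (Some x) by []; rewrite AB.
  by have := gB x (fun h => h Bx); move: gx => /=; lra.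
Qed.

Lemma normal_connectification : normal_space X -> normal_space Y.
Proof.
move=> nX; apply/(@normal_openP R) => A B cA cB AB.
have [BN|nBN] := pselect (B None); last exact: normal_separable_off_None.
apply: separable_sym; apply: normal_separable_off_None => //; first by rewrite setIC.
by move=> AN; have : (A `&` B) None by []; rewrite AB.
Qed.

Lemma completely_normal_separable_off_None (A B : set Y) : completely_normal X ->
  closure A `&` B = set0 -> A `&` closure B = set0 -> ~ closure B None ->
  separable A B.
Proof.
move=> cnX clAB AclB nBN.
have [g ag gB] := nbhs_None_admissible
  (open_nbhs_nbhs (conj (closed_openC (@closed_closure _ B)) nBN)).
have [cg _ _] := ag.
have gclB x : closure B (Some x) -> 1 <= g x by move=> clBx; apply: gB.
apply: (separable_by_admissible ag).
- by move=> x Bx; apply/gclB/subset_closure.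
- by move=> BN; apply/nBN/subset_closure.
have cl_le : closure [set x | g x <= 2^-1] = [set x | g x <= 2^-1].
  by apply/esym/closure_id/closed_le_fun.
apply: cnX; apply/seteqP; split=> // x [].
  rewrite closureU cl_le => -[/(closure_preimage Some_continuous) clAx|gx] Bx.
    by have : (closure A `&` B) (Some x) by []; rewrite clAB.
  by have := gclB x (subset_closure (Bx : B (Some x))); move: gx => /=; lra.
move=> [Ax|gx] /(closure_preimage Some_continuous) clBx.
  by have : (A `&` closure B) (Some x) by []; rewrite AclB.
by have := gclB x clBx; move: gx => /=; lra.
Qed.

Lemma separable_of_traces (A B : set Y) : completely_normal X ->
  ~ A None -> ~ B None -> closure A `&` B = set0 -> A `&` closure B = set0 ->
  separable A B.
Proof.
move=> cnX nAN nBN clAB AclB.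
have clA := closure_preimage (A := A) Some_continuous.
have clB := closure_preimage (A := B) Some_continuous.
have [U [V [oU oV AU BV UV]]] : separable (Some @^-1` A) (Some @^-1` B).
  apply: cnX; apply/seteqP; split=> // x [].
    by move=> /clA clAx Bx; have : (closure A `&` B) (Some x) by []; rewrite clAB.
  by move=> Ax /clB clBx; have : (A `&` closure B) (Some x) by []; rewrite AclB.
exists (Some @` U), (Some @` V); split; try exact: open_Some_image.
- by move=> [x|] Ax //; exists x => //; apply: AU.
- by move=> [x|] Bx //; exists x => //; apply: BV.
- apply/seteqP; split=> // _ [[x Ux <-] [z Vz [ezx]]].
  have : (U `&` V) x by split=> //; rewrite -ezx.
  by rewrite UV.
Qed.

Lemma completely_normal_connectification :
  completely_normal X -> completely_normal Y.
Proof.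
move=> cnX A B clAB AclB.
have [nBN|/contrapT BN] := pselect (~ closure B None).
  exact: completely_normal_separable_off_None.
have [nAN|/contrapT AN] := pselect (~ closure A None).
  by apply: separable_sym; apply: completely_normal_separable_off_None; rewrite 1?setIC.
apply: separable_of_traces => // [AN'|BN'].
  by have : (A `&` closure B) None by []; rewrite AclB.
by have : (closure A `&` B) None by []; rewrite clAB.
Qed.

Lemma connectification_property (P : topologicalType -> Prop) :
  topological_property P -> closed_hereditary P -> co_local P ->
  finite_closed_sums P -> (forall x, P (set_type (component x))) -> P Y.
Proof.
move=> tpP chP clP fsP Pcomp; apply: (clP _ _ _ open_base_basic) => _ [g ag <-].
have [cg _ [[s cover] _]] := ag.
pose K (i : 'I_(size s)) := component (tnth (in_tuple s) i) `&` [set x | 1 <= g x].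
have closedK i : closed (K i).
  by apply: closedI; [exact: component_closed | exact: closed_ge_fun].
have KB i : (Some @` K i : set Y) `<=` ~` basic g.
  by move=> _ [x [_ gx] <-]; apply/negP; rewrite -leNgt.
apply: (@fsP (set_type (~` basic g)) (size s)
  (fun i => set_val @^-1` (Some @` K i : set Y))).
- move=> i; apply: (proj1 (continuous_closedP _) (@initial_continuous _ _ _)).
  by apply: closed_Some_image ag (closedK i) _ => x [].
- move=> i; apply: (tpP _ _ (homeomorphic_sym (homeomorphic_subspace_preimage (KB i)))).
  apply: (tpP _ _ (homeomorphic_embedding_image _ embedding_Some)).
  exact: closed_hereditary_sub (Pcomp _) (closedK i) (@subIsetl _ _ _).
apply/seteqP; split=> // z _.
have : (~` basic g) (set_val z) := set_valP z.
case ez: (set_val z) => [x|] //= /negP; rewrite -leNgt => gx.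
have [c cs cx] := cover x (lt_le_trans ltr01 gx).
have /tnthP [i eci] : c \in in_tuple s := cs.
by exists i => //; exists x => //; split; rewrite -?eci.
Qed.

Section noncompact_components.
Hypothesis noncompact : forall x, ~ compact (component x).

Let escaping_component x : escaping (component x) (escape (component x)) :=
  escapeP (@noncompact x).

Lemma component_not_small x : ~ small (component x).
Proof.
move=> [_ /(_ x) [G FG CG0]].
have [PF FC _] := escaping_component x.
have : escape (component x) (component x `&` G) by exact: filterI.
by rewrite CG0; apply: filter_not_empty.
Qed.

Lemma admissible_component g x : admissible g ->
  exists2 y, component x y & g y < 1.
Proof.
move=> [_ _ sg]; apply: contrapT => nn; apply: (@component_not_small x).
apply: sub_small sg => y cy /=.
have : ~ (g y < 1) by move=> gy; apply: nn; exists y.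
by move/negP; rewrite -leNgt => /(lt_le_trans ltr01).
Qed.

Lemma closure_component_None x : closure (Some @` component x : set Y) None.
Proof.
move=> B [g ag gB]; have [z cz gz] := admissible_component x ag.
by exists (Some z); split; [exists z | apply: gB].
Qed.

Variable x0 : X.

Lemma dense_range_Some : dense (range (Some : X -> Y)).
Proof.
move=> O [[x|] Ox] oO; first by exists (Some x); split=> //; exists x.
have [g ag gO] : nbhs (None : Y) O by apply: open_nbhs_nbhs.
have [z _ gz] := admissible_component x0 ag.
by exists (Some z); split; [apply: gO | exists z].
Qed.

Lemma connected_connectification : connected [set: Y].
Proof.
have -> : [set: Y] = \bigcup_(x in [set: X]) closure (Some @` component x : set Y).
  apply/seteqP; split=> // -[y|] _; last by exists x0 => //; exact: closure_component_None.
  by exists y => //; apply: subset_closure; exists y => //; exact: component_refl.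
apply: bigcup_connected => [|x _].
  by exists None => x _; exact: closure_component_None.
apply/connected_closure/connected_continuous_connected; first exact: component_connected.
by apply: continuous_subspaceT; exact: Some_continuous.
Qed.

Hypothesis lcX : locally_connected X.

Lemma small_nbhs y : exists N, [/\ open N, N y & small N].
Proof.
have [PF FC ncl] := escaping_component y.
have /existsNP [A /existsNP [B /not_implyP [FA /not_implyP [nB AB]]]] :=
  ncl y (component_refl y).
have [N [oN Ny NB]] : exists N, [/\ open N, N y & N `<=` B].
  by move: nB; rewrite nbhsE => -[N [oN Ny] NB]; exists N.
exists (N `&` component y); split.
- exact: openI (open_component y lcX).
- by split=> //; exact: component_refl.
split; first by exists [:: y] => z [_ cz]; exists y => //=; rewrite inE.
move=> x; have [cxy|ncxy] := pselect (component x y).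
  exists A; first by rewrite (same_connected_component cxy).
  apply/seteqP; split=> // z [[Nz _] Az]; apply: AB; exists z; split=> //.
  exact: NB.
exists (component x); first by have [] := escaping_component x.
apply/seteqP; split=> // z [[_ yz] xz]; apply: ncxy.
rewrite (same_connected_component xz) -(same_connected_component yz).
exact: component_refl.
Qed.

Hypothesis crX : cregular X.

Lemma admissible_bump x U : open U -> U x -> exists g,
  [/\ admissible g, g x = 1, (forall y, 0 < g y -> U y) & forall y, g y <= 1].
Proof.
move=> oU Ux; have [N [oN Nx sN]] := small_nbhs x.
have cW : closed (~` (U `&` N)) by apply: open_closedC; exact: openI.
have [f [cf fx f1 f01]] := crX cW (fun h => h (conj Ux Nx)).
have lt1 y : f y < 1 -> U y /\ N y.
  by apply: contraPP => nUN; rewrite f1 ?ltxx.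
exists (fun y => 1 - f y); split.
- split.
  + by move=> y; apply: (@continuousB R R^o _ (fun=> 1) f); [exact: cvg_cst | exact: cf].
  + by move=> y; rewrite subr_ge0; have /andP[] := f01 y.
  + by apply: sub_small sN => y /=; rewrite subr_gt0 => /lt1 [].
- by rewrite fx subr0.
- by move=> y; rewrite subr_gt0 => /lt1 [].
- by move=> y; rewrite lerBlDr lerDl; have /andP[] := f01 y.
Qed.

Lemma accessible_connectification : accessible_space X -> accessible_space Y.
Proof.
move=> t1X [a|] [b|] // ab.
- have [A [oA aA bA]] : exists A, [/\ open A, a \in A & b \in ~` A].
    by apply: t1X; apply: contraNneq ab => ->.
  exists (Some @` A); split; first exact: open_Some_image.
    by rewrite inE; exists a => //; rewrite -inE.
  by rewrite inE => -[z zA [ezb]]; move: bA; rewrite inE -ezb; apply.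
- exists (range (Some : X -> Y)); split; first exact/open_Some_image/openT.
    by rewrite inE; exists a.
  by rewrite inE => -[].
- have [g [ag gb _ _]] := admissible_bump (x := b) openT I.
  exists (basic g); split; first exact: open_basic.
    by rewrite inE.
  by rewrite inE /= gb ltxx.
Qed.

Lemma separating_fun_Some x (B : set Y) : closed B -> ~ B (Some x) ->
  exists f, separating_fun (Some x : Y) B f.
Proof.
move=> cB nBx; have oU : open (Some @^-1` (~` B) : set X).
  by apply: (proj1 (continuousP _) Some_continuous); exact: closed_openC.
have [g [ag gx gU g1]] := admissible_bump oU nBx.
have [cg g0 _] := ag.
exists (extend 1 (fun z => 1 - g z)); split.
- apply: (continuous_extend _ ag) => [z|z].
    by apply: (@continuousB R R^o _ (fun=> 1) g); [exact: cvg_cst | exact: cg].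
  by rewrite opprB addrCA subrr addr0 ger0_norm.
- by rewrite /= gx subrr.
- move=> [z|] Bz //=.
  have -> : g z = 0 by apply/eqP; rewrite eq_le g0 andbT leNgt; apply/negP => /gU.
  by rewrite subr0.
- move=> [z|] /=; last by rewrite lexx ler01.
  by rewrite subr_ge0 g1 /= lerBlDr lerDl g0.
Qed.

Lemma separating_fun_None (B : set Y) : closed B -> ~ B None ->
  exists f, separating_fun (None : Y) B f.
Proof.
move=> cB nBN; have [g ag gB] := nbhs_None_admissible
  (open_nbhs_nbhs (conj (closed_openC cB) nBN)).
have [cg g0 _] := ag.
exists (extend 0 (fun z => Num.min (g z) 1)); split => //.
- apply: (continuous_extend _ ag) => [z|z].
    by apply: (@continuous_min _ _ g (fun=> 1)); [exact: cg | exact: cvg_cst].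
  by rewrite sub0r normrN ger0_norm ?ge_min ?lexx // le_min g0 ler01.
- by move=> [z|] Bz //=; rewrite min_r //; apply: gB.
- move=> [z|] /=; last by rewrite lexx ler01.
  by rewrite le_min g0 ler01 ge_min lexx orbT.
Qed.

Lemma cregular_connectification : cregular Y.
Proof. by case=> [x|]; [exact: separating_fun_Some | exact: separating_fun_None]. Qed.

End noncompact_components.
End connectification.

Theorem lemma2p4 (i : sep_index) (P : topologicalType -> Prop) :
  topological_property P -> closed_hereditary P -> co_local P ->
  finite_closed_sums P ->
  forall X : topologicalType, (exists x : X, True) ->
  locally_connected X -> Ti i X ->
  (forall x : X, ~ compact (connected_component [set: X] x) /\
                 P (set_type (connected_component [set: X] x))) ->
  exists (Y : topologicalType) (e : X -> Y),
    one_point_connectification e /\ Ti i Y /\ P Y.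
Proof.
move=> tpP chP clP fsP X [x0 _] lcX TiX HX.
have noncompact x := (HX x).1.
have t1X : accessible_space X by case: i TiX => -[].
have crX : cregular X.
  case: i TiX => -[h _]; first exact/completely_regularP.
    exact: normal_cregular.
  apply: normal_cregular => //.
  exact/completely_normal_normal/hereditarily_normal_completely_normal.
exists (connectification X), Some; split; [|split].
- split; [exact: embedding_Some | exact: connected_connectification noncompact x0 |
          exact: dense_range_Some noncompact x0 | by exists None; exact: setC_range_Some].
- case: i TiX => -[h _]; split;
    try exact: accessible_connectification noncompact lcX crX t1X.
  + exact/completely_regularP/(cregular_connectification noncompact lcX crX).
  + exact: normal_connectification.
  + exact/completely_normal_hereditarily_normal/completely_normal_connectification/
      hereditarily_normal_completely_normal.
- by apply: connectification_property => // x; case: (HX x).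
Qed.
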